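(* Let $\theta\in\mathbb R\setminus\mathbb Q$. Then $H^1(\mathcal A_\theta^{alg},{}_{-1}\mathcal A_\theta^{alg*})=0$.
   Context: Let $\lambda=e^{2\pi i\theta}$. $\mathcal A_\theta^{alg}$ is the complex algebra of finite linear combinations $\sum a_{n,m}U_1^nU_2^m$ generated by invertible $U_1,U_2$ with $U_2U_1=\lambda U_1U_2$. Its linear dual $\mathcal A_\theta^{alg*}$ is identified with the space of formal series $\sum_{(n,m)\in\mathbb Z^2}\varphi_{n,m}U_1^nU_2^m$ with the standard bimodule structure. $\sigma$ is the automorphism $\sigma(U_j)=U_j^{-1}$, and ${}_{-1}\mathcal A_\theta^{alg*}$ is $\mathcal A_\theta^{alg*}$ with bimodule structure $\alpha\cdot a=\sigma(\alpha)a$, $a\cdot\alpha=a\alpha$. $H^\bullet$ is Hochschild cohomology. *)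

From Stdlib Require Import Reals ZArith List Lia Lra ClassicalEpsilon.
Open Scope R_scope.

Definition C := (R * R)%type.
Definition C0 : C := (0, 0).
Definition C1 : C := (1, 0).
Definition Cadd (x y : C) : C := (fst x + fst y, snd x + snd y).
Definition Cmul (x y : C) : C :=
  (fst x * fst y - snd x * snd y, fst x * snd y + snd x * fst y).
Definition Copp (x : C) : C := (- fst x, - snd x).
Definition Csub (x y : C) : C := Cadd x (Copp y).
Definition Cinv (x : C) : C :=
  let d := fst x * fst x + snd x * snd x in (fst x / d, - snd x / d).
Fixpoint Cpow (x : C) (n : nat) : C :=
  match n with O => C1 | S n => Cmul x (Cpow x n) end.
Definition Cpowz (x : C) (z : Z) : C :=
  match z with
  | Z0 => C1
  | Zpos p => Cpow x (Pos.to_nat p)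
  | Zneg p => Cinv (Cpow x (Pos.to_nat p))
  end.

Definition lam (theta : R) : C := (cos (2 * PI * theta), sin (2 * PI * theta)).

Lemma Cmul_0_r x : Cmul x C0 = C0.
Proof. unfold Cmul, C0; simpl; f_equal; ring. Qed.
Lemma Cmul_0_l x : Cmul C0 x = C0.
Proof. unfold Cmul, C0; simpl; f_equal; ring. Qed.
Lemma Cadd_0_0 : Cadd C0 C0 = C0.
Proof. unfold Cadd, C0; simpl; f_equal; ring. Qed.

(** * The algebra A_theta^alg :
    an element sum a_{n,m} U1^n U2^m is its finitely supported
    coefficient function (n,m) |-> a_{n,m}. *)
Definition finsupp (f : Z * Z -> C) : Prop :=
  exists N : nat, forall p : Z * Z,
    (Z.of_nat N < Z.abs (fst p))%Z \/ (Z.of_nat N < Z.abs (snd p))%Z -> f p = C0.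

Definition Aalg := { f : Z * Z -> C | finsupp f }.

Definition coef (a : Aalg) : Z * Z -> C := proj1_sig a.

Definition bnd (a : Aalg) : nat :=
  proj1_sig (constructive_indefinite_description _ (proj2_sig a)).

Lemma bnd_spec (a : Aalg) : forall p : Z * Z,
  (Z.of_nat (bnd a) < Z.abs (fst p))%Z \/ (Z.of_nat (bnd a) < Z.abs (snd p))%Z ->
  coef a p = C0.
Proof.
  unfold bnd, coef.
  destruct (constructive_indefinite_description _ (proj2_sig a)) as [N HN]; exact HN.
Qed.

Definition zrange (N : nat) : list Z :=
  map (fun k => (Z.of_nat k - Z.of_nat N)%Z) (seq 0 (2 * N + 1)).
Definition boxsum (N : nat) (F : Z * Z -> C) : C :=
  fold_right (fun q acc => Cadd (F q) acc) C0 (list_prod (zrange N) (zrange N)).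

Lemma fold_zero (F : Z * Z -> C) (l : list (Z * Z)) :
  (forall q, F q = C0) -> fold_right (fun q acc => Cadd (F q) acc) C0 l = C0.
Proof.
  intros H; induction l as [|q l IH]; simpl; [reflexivity|].
  rewrite IH, H; apply Cadd_0_0.
Qed.

(** product: (a_q U1^{q1} U2^{q2}) (b_r U1^{r1} U2^{r2})
      = lambda^{q2 r1} a_q b_r U1^{q1+r1} U2^{q2+r2}
    (from U2 U1 = lambda U1 U2). *)
Definition mulc (theta : R) (a b : Aalg) (p : Z * Z) : C :=
  boxsum (bnd a) (fun q =>
    Cmul (Cmul (Cpowz (lam theta) (snd q * (fst p - fst q))%Z) (coef a q))
         (coef b (fst p - fst q, snd p - snd q)%Z)).

Lemma mulc_finsupp theta a b : finsupp (mulc theta a b).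
Proof.
  exists (bnd a + bnd b)%nat. intros p Hp. unfold mulc, boxsum.
  apply fold_zero. intros q.
  destruct (Z_lt_le_dec (Z.of_nat (bnd a)) (Z.abs (fst q))) as [H1|H1].
  { rewrite (bnd_spec a q) by (left; exact H1). rewrite Cmul_0_r. apply Cmul_0_l. }
  destruct (Z_lt_le_dec (Z.of_nat (bnd a)) (Z.abs (snd q))) as [H2|H2].
  { rewrite (bnd_spec a q) by (right; exact H2). rewrite Cmul_0_r. apply Cmul_0_l. }
  rewrite (bnd_spec b). apply Cmul_0_r.
  simpl. rewrite Nat2Z.inj_add in Hp. lia.
Qed.

Definition Amul (theta : R) (a b : Aalg) : Aalg :=
  exist _ (mulc theta a b) (mulc_finsupp theta a b).

Lemma add_finsupp (a b : Aalg) : finsupp (fun p => Cadd (coef a p) (coef b p)).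
Proof.
  exists (bnd a + bnd b)%nat. intros p Hp. rewrite Nat2Z.inj_add in Hp.
  rewrite (bnd_spec a), (bnd_spec b) by lia. apply Cadd_0_0.
Qed.

Definition Aadd (a b : Aalg) : Aalg :=
  exist _ (fun p => Cadd (coef a p) (coef b p)) (add_finsupp a b).

Lemma scale_finsupp (c : C) (a : Aalg) : finsupp (fun p => Cmul c (coef a p)).
Proof.
  exists (bnd a). intros p Hp. rewrite (bnd_spec a) by exact Hp. apply Cmul_0_r.
Qed.

Definition Ascale (c : C) (a : Aalg) : Aalg :=
  exist _ (fun p => Cmul c (coef a p)) (scale_finsupp c a).

(** sigma(U_j) = U_j^{-1}; hence sigma(U1^n U2^m) = U1^{-n} U2^{-m}. *)
Lemma sigma_finsupp (a : Aalg) : finsupp (fun p => coef a (- fst p, - snd p)%Z).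
Proof.
  exists (bnd a). intros p Hp. apply bnd_spec. simpl. lia.
Qed.

Definition sigma (a : Aalg) : Aalg :=
  exist _ (fun p => coef a (- fst p, - snd p)%Z) (sigma_finsupp a).

(** * The linear dual A^* : C-linear functionals on A_theta^alg,
    with the standard bimodule structure (a.f.b)(x) = f(b x a).
    The twisted bimodule _{-1}A^* : alpha . f = sigma(alpha) . f, f . a = f a. *)
Definition is_linear_functional (f : Aalg -> C) : Prop :=
  (forall a b, f (Aadd a b) = Cadd (f a) (f b)) /\
  (forall c a, f (Ascale c a) = Cmul c (f a)).

Definition Dual := Aalg -> C.

Definition lact_tw (theta : R) (alpha : Aalg) (f : Dual) : Dual :=
  fun x => f (Amul theta x (sigma alpha)).
Definition ract (theta : R) (f : Dual) (a : Aalg) : Dual :=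
  fun x => f (Amul theta a x).

Definition is_cochain1 (D : Aalg -> Dual) : Prop :=
  (forall a, is_linear_functional (D a)) /\
  (forall a b x, D (Aadd a b) x = Cadd (D a x) (D b x)) /\
  (forall c a x, D (Ascale c a) x = Cmul c (D a x)).

Definition is_cocycle1 (theta : R) (D : Aalg -> Dual) : Prop :=
  forall a b x, D (Amul theta a b) x = Cadd (lact_tw theta a (D b) x) (ract theta (D a) b x).

Definition is_coboundary1 (theta : R) (D : Aalg -> Dual) : Prop :=
  exists phi : Dual, is_linear_functional phi /\
    forall a x, D a x = Csub (lact_tw theta a phi x) (ract theta phi a x).

Definition H1_twisted_dual_vanishes (theta : R) : Prop :=
  forall D, is_cochain1 D -> is_cocycle1 theta D -> is_coboundary1 theta D.

Definition irrational (theta : R) : Prop :=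
  ~ exists p q : Z, q <> 0%Z /\ theta = IZR p / IZR q.

From Stdlib Require Import Reals ZArith List Lia Lra Permutation ProofIrrelevance FunctionalExtensionality.
Open Scope R_scope.

(* A 1-cochain D is determined by the numbers d p r = D (U^p) (U^r), and the cocycle identity
   becomes an identity on Z^2 twisted by the commutation factors lambda^(p2 q1).  Subtract the
   coboundary of phi with phi (U^r) = f r, where f solves the two-step recurrences
   f (k+1, m) = lambda^(-m) f (k-1, m) - d U1 (k, m) along the rows, seeded on the columns 0 and 1
   by similar recurrences that make the difference vanish at U2 there.  The cocycle identity
   propagates this vanishing at U2 to all columns, and the set of p at which a cocycle vanishes
   identically is a subgroup of Z^2, hence everything once it contains U1 and U2.  A recurrence
   step only multiplies by a power of lambda and never divides by 1 - lambda^k, so the argument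
   does not use the irrationality of theta. *)

Lemma C_ring : ring_theory C0 C1 Cadd Cmul Csub Copp (@eq C).
Proof.
  constructor; intros; unfold Csub, Cadd, Cmul, Copp, C0, C1;
  repeat match goal with x : C |- _ => destruct x end; simpl; f_equal; ring.
Qed.
Add Ring C_ring : C_ring.

Definition Ceq_dec (x y : C) : {x = y} + {x <> y}.
Proof. decide equality; apply Req_EM_T. Defined.

Definition Zpair_eq_dec (p q : Z * Z) : {p = q} + {p <> q}.
Proof. decide equality; apply Z.eq_dec. Defined.

Lemma C1_neq_C0 : C1 <> C0.
Proof. intros H. injection H. lra. Qed.

Lemma Csub_eq0 x y : Csub x y = C0 -> x = y.
Proof. intros H. transitivity (Cadd (Csub x y) y); [ring|]. rewrite H. ring. Qed.

Definition lamz (theta : R) (k : Z) : C :=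
  (cos (2 * PI * theta * IZR k), sin (2 * PI * theta * IZR k)).

Lemma lamz_add th a b : Cmul (lamz th a) (lamz th b) = lamz th (a + b).
Proof.
  unfold lamz, Cmul; simpl. rewrite plus_IZR, Rmult_plus_distr_l, cos_plus, sin_plus.
  f_equal; ring.
Qed.

Lemma lamz_0 th : lamz th 0 = C1.
Proof. unfold lamz, C1. rewrite Rmult_0_r, cos_0, sin_0. reflexivity. Qed.

Lemma lamz_cancel th k z : Cmul (lamz th k) z = C0 -> z = C0.
Proof.
  intros H. transitivity (Cmul (Cmul (lamz th (- k)) (lamz th k)) z).
  - rewrite lamz_add, Z.add_opp_diag_l, lamz_0. ring.
  - rewrite <- (Cmul_0_r (lamz th (- k))), <- H. ring.
Qed.

Lemma Cpow_lam th n : Cpow (lam th) n = lamz th (Z.of_nat n).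
Proof.
  induction n as [|n IH]; simpl Cpow.
  - symmetry. apply lamz_0.
  - rewrite IH. replace (lam th) with (lamz th 1) by (unfold lamz, lam; now rewrite Rmult_1_r).
    rewrite lamz_add, Nat2Z.inj_succ, Z.add_comm. reflexivity.
Qed.

Lemma Cpowz_lam th k : Cpowz (lam th) k = lamz th k.
Proof.
  destruct k as [|p|p]; simpl.
  - symmetry; apply lamz_0.
  - now rewrite Cpow_lam, positive_nat_Z.
  - rewrite Cpow_lam, positive_nat_Z. unfold Cinv, lamz. simpl.
    rewrite IZR_NEG, Ropp_mult_distr_r_reverse, cos_neg, sin_neg.
    pose proof (sin2_cos2 (2 * PI * th * IZR (Z.pos p))) as Hs. unfold Rsqr in Hs.
    replace (_ * _ + _ * _) with 1 by lra.
    f_equal; field.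
Qed.

Section FiniteSums.
Context {A : Type}.

Definition sumL (F : A -> C) (l : list A) : C :=
  fold_right (fun q acc => Cadd (F q) acc) C0 l.

Lemma sumL_ext F G l : (forall q, In q l -> F q = G q) -> sumL F l = sumL G l.
Proof. induction l; simpl; intros H; [reflexivity|]. rewrite H, IHl; auto. Qed.

Lemma sumL_add F G l : sumL (fun q => Cadd (F q) (G q)) l = Cadd (sumL F l) (sumL G l).
Proof. induction l; simpl; [ring|]. rewrite IHl. ring. Qed.

Lemma sumL_scale c F l : sumL (fun q => Cmul c (F q)) l = Cmul c (sumL F l).
Proof. induction l; simpl; [ring|]. rewrite IHl. ring. Qed.

Lemma sumL_zero F l : (forall q, In q l -> F q = C0) -> sumL F l = C0.
Proof. induction l; simpl; intros H; [reflexivity|]. rewrite H, IHl; auto. ring. Qed.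

Lemma sumL_perm F l1 l2 : Permutation l1 l2 -> sumL F l1 = sumL F l2.
Proof. induction 1; simpl; congruence || ring. Qed.

Definition nonzero (F : A -> C) (q : A) : bool := if Ceq_dec (F q) C0 then false else true.

Lemma sumL_filter_nonzero F l : sumL F l = sumL F (filter (nonzero F) l).
Proof.
  induction l as [|q l IH]; simpl; [reflexivity|]. unfold nonzero at 1.
  destruct (Ceq_dec (F q) C0) as [E|E]; simpl; rewrite IH; [rewrite E; ring|reflexivity].
Qed.

Lemma sumL_support F l1 l2 : NoDup l1 -> NoDup l2 ->
  (forall q, F q <> C0 -> In q l1 <-> In q l2) -> sumL F l1 = sumL F l2.
Proof.
  intros H1 H2 Hsupp. rewrite (sumL_filter_nonzero F l1), (sumL_filter_nonzero F l2).
  apply sumL_perm, NoDup_Permutation; try apply NoDup_filter; auto.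
  intros q. rewrite !filter_In. unfold nonzero.
  destruct (Ceq_dec (F q) C0) as [E|E]; [|specialize (Hsupp q E)]; intuition discriminate.
Qed.

Lemma sumL_single F l p : NoDup l -> In p l -> (forall q, q <> p -> F q = C0) ->
  sumL F l = F p.
Proof.
  intros Hnd Hin HF. induction l as [|a l IH]; [destruct Hin|].
  inversion Hnd as [|? ? Ha Hl]; subst. simpl. destruct Hin as [<-|Hin].
  - rewrite sumL_zero; [ring|]. intros q Hq. apply HF. intros ->. contradiction.
  - rewrite IH, HF; auto; [ring|]. intros ->. contradiction.
Qed.

End FiniteSums.

Definition box (N : nat) : list (Z * Z) := list_prod (zrange N) (zrange N).

Lemma In_zrange N k : In k (zrange N) <-> (- Z.of_nat N <= k <= Z.of_nat N)%Z.
Proof.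
  unfold zrange. rewrite in_map_iff. split.
  - intros [x [<- Hx]]. apply in_seq in Hx. lia.
  - intros H. exists (Z.to_nat (k + Z.of_nat N)). split; [lia|]. apply in_seq. lia.
Qed.

Lemma NoDup_zrange N : NoDup (zrange N).
Proof.
  apply FinFun.Injective_map_NoDup; [|apply seq_NoDup]. intros x y H. lia.
Qed.

Lemma NoDup_list_prod {X Y : Type} (l1 : list X) (l2 : list Y) :
  NoDup l1 -> NoDup l2 -> NoDup (list_prod l1 l2).
Proof.
  induction l1 as [|a l1 IH]; intros H1 H2; simpl; [constructor|].
  inversion H1; subst. apply NoDup_app; auto.
  - apply FinFun.Injective_map_NoDup; auto. intros x y H; injection H; auto.
  - intros [x y] Hx Hy. apply in_map_iff in Hx. destruct Hx as [z [E _]].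
    injection E as -> ->. apply in_prod_iff in Hy. tauto.
Qed.

Lemma NoDup_box N : NoDup (box N).
Proof. apply NoDup_list_prod; apply NoDup_zrange. Qed.

Lemma In_box N q :
  In q (box N) <-> (Z.abs (fst q) <= Z.of_nat N /\ Z.abs (snd q) <= Z.of_nat N)%Z.
Proof. destruct q as [x y]. unfold box. rewrite in_prod_iff, !In_zrange. simpl. lia. Qed.

Lemma coef_supp_box a q N : (bnd a <= N)%nat -> coef a q <> C0 -> In q (box N).
Proof.
  intros HN Hq. apply In_box.
  destruct (Z_lt_le_dec (Z.of_nat (bnd a)) (Z.abs (fst q))),
    (Z_lt_le_dec (Z.of_nat (bnd a)) (Z.abs (snd q)));
    try (exfalso; apply Hq, bnd_spec; tauto); lia.
Qed.

Lemma sumL_box_enlarge (F : Z * Z -> C) a N : (bnd a <= N)%nat ->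
  (forall q, coef a q = C0 -> F q = C0) -> sumL F (box (bnd a)) = sumL F (box N).
Proof.
  intros HN HF. apply sumL_support; try apply NoDup_box.
  intros q Hq. assert (coef a q <> C0) by (intros E; apply Hq, HF, E).
  split; intros _; apply (coef_supp_box a); auto.
Qed.

Lemma Aext (a b : Aalg) : (forall p, coef a p = coef b p) -> a = b.
Proof.
  destruct a as [fa ha], b as [fb hb]. unfold coef; simpl. intros H.
  assert (fa = fb) as <- by (apply functional_extensionality; auto).
  f_equal. apply proof_irrelevance.
Qed.

Lemma coef_Aadd a b p : coef (Aadd a b) p = Cadd (coef a p) (coef b p).
Proof. reflexivity. Qed.

Lemma coef_Ascale c a p : coef (Ascale c a) p = Cmul c (coef a p).
Proof. reflexivity. Qed.

Definition monoc (p q : Z * Z) : C := if Zpair_eq_dec q p then C1 else C0.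

Lemma monoc_finsupp p : finsupp (monoc p).
Proof.
  exists (Z.to_nat (Z.abs (fst p) + Z.abs (snd p))). intros q Hq.
  unfold monoc. destruct (Zpair_eq_dec q p); subst; [lia|reflexivity].
Qed.

Definition mono (p : Z * Z) : Aalg := exist _ (monoc p) (monoc_finsupp p).

Lemma coef_mono p q : coef (mono p) q = if Zpair_eq_dec q p then C1 else C0.
Proof. reflexivity. Qed.

Lemma mono_in_box p : In p (box (bnd (mono p))).
Proof.
  apply (coef_supp_box (mono p)); auto. rewrite coef_mono.
  destruct (Zpair_eq_dec p p); [apply C1_neq_C0|congruence].
Qed.

Fixpoint monomial_sum (x : Aalg) (l : list (Z * Z)) : Aalg :=
  match l with
  | nil => Ascale C0 x
  | q :: l => Aadd (Ascale (coef x q) (mono q)) (monomial_sum x l)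
  end.

Lemma coef_monomial_sum x l p :
  coef (monomial_sum x l) p = sumL (fun q => Cmul (coef (mono q) p) (coef x q)) l.
Proof.
  induction l as [|q l IH]; cbn [monomial_sum sumL fold_right].
  - rewrite coef_Ascale. ring.
  - rewrite coef_Aadd, coef_Ascale, IH. unfold sumL. ring.
Qed.

Lemma monomial_sum_box x : monomial_sum x (box (bnd x)) = x.
Proof.
  apply Aext. intros p. rewrite coef_monomial_sum.
  destruct (in_dec Zpair_eq_dec p (box (bnd x))) as [Hp|Hp].
  - rewrite (sumL_single _ _ p (NoDup_box _) Hp).
    + rewrite coef_mono. destruct (Zpair_eq_dec p p); [ring|congruence].
    + intros q Hq. rewrite coef_mono. destruct (Zpair_eq_dec p q); [congruence|ring].
  - rewrite sumL_zero.
    + symmetry. destruct (Ceq_dec (coef x p) C0) as [E|E]; [exact E|].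
      exfalso. apply Hp, (coef_supp_box x); auto.
    + intros q Hq. rewrite coef_mono. destruct (Zpair_eq_dec p q); [subst; contradiction|ring].
Qed.

Lemma linear_functional_mono_expansion f x : is_linear_functional f ->
  f x = sumL (fun q => Cmul (coef x q) (f (mono q))) (box (bnd x)).
Proof.
  intros [Hadd Hsc]. rewrite <- (monomial_sum_box x) at 1.
  induction (box (bnd x)) as [|q l IH]; simpl.
  - rewrite Hsc. ring.
  - rewrite Hadd, Hsc, IH. reflexivity.
Qed.

Lemma linear_functional_ext f g : is_linear_functional f -> is_linear_functional g ->
  (forall p, f (mono p) = g (mono p)) -> forall x, f x = g x.
Proof.
  intros Hf Hg H x. rewrite (linear_functional_mono_expansion f x Hf),
    (linear_functional_mono_expansion g x Hg).
  apply sumL_ext. intros q _. now rewrite H.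
Qed.

Lemma cochain1_ext D1 D2 : is_cochain1 D1 -> is_cochain1 D2 ->
  (forall p q, D1 (mono p) (mono q) = D2 (mono p) (mono q)) -> forall a x, D1 a x = D2 a x.
Proof.
  intros [H1 [H1add H1sc]] [H2 [H2add H2sc]] H a x.
  apply (linear_functional_ext (fun a => D1 a x) (fun a => D2 a x)).
  - split; auto.
  - split; auto.
  - intros p. apply linear_functional_ext; auto.
Qed.

Definition mul_term (th : R) (a b : Aalg) (p q : Z * Z) : C :=
  Cmul (Cmul (lamz th (snd q * (fst p - fst q))) (coef a q))
       (coef b (fst p - fst q, snd p - snd q)%Z).

Lemma coef_Amul th a b p N : (bnd a <= N)%nat ->
  coef (Amul th a b) p = sumL (mul_term th a b p) (box N).
Proof.
  intros HN. change (coef (Amul th a b) p) with (mulc th a b p). unfold mulc.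
  change (boxsum ?M ?F) with (sumL F (box M)).
  rewrite (sumL_box_enlarge _ a N HN).
  - apply sumL_ext. intros q _. unfold mul_term. now rewrite Cpowz_lam.
  - intros q Hq. rewrite Hq. ring.
Qed.

Lemma Amul_addl th a b x : Amul th (Aadd a b) x = Aadd (Amul th a x) (Amul th b x).
Proof.
  apply Aext. intros p. set (N := (bnd a + bnd b + bnd (Aadd a b))%nat).
  rewrite coef_Aadd, !(coef_Amul th _ x p N) by lia.
  rewrite <- sumL_add.
  apply sumL_ext. intros q _. unfold mul_term. rewrite coef_Aadd. ring.
Qed.

Lemma Amul_scalel th c a x : Amul th (Ascale c a) x = Ascale c (Amul th a x).
Proof.
  apply Aext. intros p. set (N := (bnd a + bnd (Ascale c a))%nat).
  rewrite coef_Ascale, !(coef_Amul th _ x p N) by lia.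
  rewrite <- sumL_scale.
  apply sumL_ext. intros q _. unfold mul_term. rewrite coef_Ascale. ring.
Qed.

Lemma Amul_addr th a b x : Amul th x (Aadd a b) = Aadd (Amul th x a) (Amul th x b).
Proof.
  apply Aext. intros p.
  rewrite coef_Aadd, !(coef_Amul th x _ p (bnd x) (le_n _)), <- sumL_add.
  apply sumL_ext. intros q _. unfold mul_term. rewrite coef_Aadd. ring.
Qed.

Lemma Amul_scaler th c a x : Amul th x (Ascale c a) = Ascale c (Amul th x a).
Proof.
  apply Aext. intros p.
  rewrite coef_Ascale, !(coef_Amul th x _ p (bnd x) (le_n _)), <- sumL_scale.
  apply sumL_ext. intros q _. unfold mul_term. rewrite coef_Ascale. ring.
Qed.

Definition padd (p q : Z * Z) : Z * Z := (fst p + fst q, snd p + snd q)%Z.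
Definition pneg (p : Z * Z) : Z * Z := (- fst p, - snd p)%Z.
Definition pu : Z * Z := (1, 0)%Z.
Definition pv : Z * Z := (0, 1)%Z.

Ltac solve_Z2_eq :=
  repeat match goal with p : (Z * Z)%type |- _ => destruct p end;
  unfold padd, pneg, pu, pv; cbn [fst snd]; f_equal; ring.

(* The commutation factor: U^p U^q = cc th p q U^(p+q), from U2 U1 = lambda U1 U2. *)
Definition cc (th : R) (p q : Z * Z) : C := lamz th (snd p * fst q).

Lemma Amul_mono th p q : Amul th (mono p) (mono q) = Ascale (cc th p q) (mono (padd p q)).
Proof.
  apply Aext. intros s.
  rewrite coef_Ascale, (coef_Amul th _ _ s (bnd (mono p)) (le_n _)).
  rewrite (sumL_single _ _ p (NoDup_box _) (mono_in_box p)).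
  - unfold mul_term, cc. rewrite !coef_mono. destruct (Zpair_eq_dec p p); [|congruence].
    destruct p as [p1 p2], q as [q1 q2], s as [s1 s2]; unfold padd; cbn [fst snd].
    destruct (Zpair_eq_dec (s1 - p1, s2 - p2)%Z (q1, q2)) as [E|E],
      (Zpair_eq_dec (s1, s2) (p1 + q1, p2 + q2)%Z) as [E'|E'].
    + injection E as E1 _. rewrite E1. ring.
    + exfalso. apply E'. injection E as E1 E2. f_equal; lia.
    + exfalso. apply E. injection E' as E1 E2. f_equal; lia.
    + ring.
  - intros q' Hq. unfold mul_term. rewrite coef_mono.
    destruct (Zpair_eq_dec q' p); [congruence|ring].
Qed.

Lemma sigma_add a b : sigma (Aadd a b) = Aadd (sigma a) (sigma b).
Proof. apply Aext; reflexivity. Qed.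

Lemma sigma_scale c a : sigma (Ascale c a) = Ascale c (sigma a).
Proof. apply Aext; reflexivity. Qed.

Lemma sigma_mono p : sigma (mono p) = mono (pneg p).
Proof.
  apply Aext. intros [s1 s2]. change (coef (sigma (mono p)) (s1, s2)) with (coef (mono p) (- s1, - s2)%Z).
  rewrite !coef_mono. destruct p as [p1 p2]; unfold pneg; cbn [fst snd].
  destruct (Zpair_eq_dec (- s1, - s2)%Z (p1, p2)) as [E|E],
    (Zpair_eq_dec (s1, s2) (- p1, - p2)%Z) as [E'|E']; auto.
  - exfalso. apply E'. injection E as E1 E2. f_equal; lia.
  - exfalso. apply E. injection E' as E1 E2. f_equal; lia.
Qed.

Definition phif (f : Z * Z -> C) (x : Aalg) : C :=
  sumL (fun q => Cmul (coef x q) (f q)) (box (bnd x)).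

Lemma phif_linear f : is_linear_functional (phif f).
Proof.
  unfold phif. split.
  - intros a b. set (N := (bnd a + bnd b + bnd (Aadd a b))%nat).
    rewrite (sumL_box_enlarge _ (Aadd a b) N), (sumL_box_enlarge _ a N),
      (sumL_box_enlarge _ b N), <- sumL_add; try lia; try (intros q Hq; rewrite Hq; ring).
    apply sumL_ext. intros q _. rewrite coef_Aadd. ring.
  - intros c a. set (N := (bnd a + bnd (Ascale c a))%nat).
    rewrite (sumL_box_enlarge _ (Ascale c a) N), (sumL_box_enlarge _ a N), <- sumL_scale;
      try lia; try (intros q Hq; rewrite Hq; ring).
    apply sumL_ext. intros q _. rewrite coef_Ascale. ring.
Qed.

Lemma phif_mono f p : phif f (mono p) = f p.
Proof.
  unfold phif. rewrite (sumL_single _ _ p (NoDup_box _) (mono_in_box p)).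
  - rewrite coef_mono. destruct (Zpair_eq_dec p p); [ring|congruence].
  - intros q Hq. rewrite coef_mono. destruct (Zpair_eq_dec q p); [congruence|ring].
Qed.

Definition coboundary0 (th : R) (phi : Dual) : Aalg -> Dual :=
  fun a x => Csub (lact_tw th a phi x) (ract th phi a x).

Lemma coboundary0_cochain th phi : is_linear_functional phi ->
  is_cochain1 (coboundary0 th phi).
Proof.
  intros [Hadd Hsc]. unfold coboundary0, lact_tw, ract. split; [|split].
  - intros a. split.
    + intros x y. rewrite Amul_addl, Amul_addr, !Hadd. ring.
    + intros c x. rewrite Amul_scalel, Amul_scaler, !Hsc. ring.
  - intros a b x. rewrite sigma_add, Amul_addr, Amul_addl, !Hadd. ring.
  - intros c a x. rewrite sigma_scale, Amul_scaler, Amul_scalel, !Hsc. ring.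
Qed.

Definition cocycle_Z2 (th : R) (e : Z * Z -> Z * Z -> C) : Prop :=
  forall p q r, Cmul (cc th p q) (e (padd p q) r) =
    Cadd (Cmul (cc th r (pneg p)) (e q (padd r (pneg p)))) (Cmul (cc th q r) (e p (padd q r))).

Definition delta (th : R) (f : Z * Z -> C) (p r : Z * Z) : C :=
  Csub (Cmul (cc th r (pneg p)) (f (padd r (pneg p)))) (Cmul (cc th p r) (f (padd p r))).

Lemma cocycle_Z2_monomials th D : is_cochain1 D -> is_cocycle1 th D ->
  cocycle_Z2 th (fun p r => D (mono p) (mono r)).
Proof.
  intros [Hlin [_ Hsc]] Hco p q r. specialize (Hco (mono p) (mono q) (mono r)).
  unfold lact_tw, ract in Hco. rewrite sigma_mono, !Amul_mono, Hsc in Hco.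
  now rewrite (proj2 (Hlin (mono q))), (proj2 (Hlin (mono p))) in Hco.
Qed.

Lemma coboundary0_phif_mono th f p r :
  coboundary0 th (phif f) (mono p) (mono r) = delta th f p r.
Proof.
  unfold coboundary0, lact_tw, ract, delta.
  now rewrite sigma_mono, !Amul_mono, !(proj2 (phif_linear f)), !phif_mono.
Qed.

Lemma cocycle_Z2_sub th d e : cocycle_Z2 th d -> cocycle_Z2 th e ->
  cocycle_Z2 th (fun p r => Csub (d p r) (e p r)).
Proof.
  intros Hd He p q r.
  transitivity (Csub (Cmul (cc th p q) (d (padd p q) r)) (Cmul (cc th p q) (e (padd p q) r)));
    [ring|]. rewrite Hd, He. ring.
Qed.

Lemma coboundary_identity (a b e c d i j k h x y z : C) :
  Cmul a b = Cmul c d -> Cmul a e = Cmul j h -> Cmul c i = Cmul j k ->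
  Cmul a (Csub (Cmul b x) (Cmul e z)) =
  Cadd (Cmul c (Csub (Cmul d x) (Cmul i y))) (Cmul j (Csub (Cmul k y) (Cmul h z))).
Proof.
  intros Hx Hz Hy.
  transitivity (Csub (Cmul (Cmul a b) x) (Cmul (Cmul a e) z)); [ring|].
  rewrite Hx, Hz.
  transitivity (Cadd (Csub (Cmul (Cmul c d) x) (Cmul (Cmul c i) y))
                     (Csub (Cmul (Cmul j k) y) (Cmul (Cmul j h) z))); [|ring].
  rewrite Hy. ring.
Qed.

Lemma delta_cocycle th f : cocycle_Z2 th (delta th f).
Proof.
  intros p q r. unfold delta.
  replace (padd (padd r (pneg p)) (pneg q)) with (padd r (pneg (padd p q)))
    by solve_Z2_eq.
  replace (padd q (padd r (pneg p))) with (padd (padd q r) (pneg p))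
    by solve_Z2_eq.
  replace (padd p (padd q r)) with (padd (padd p q) r)
    by solve_Z2_eq.
  apply coboundary_identity; unfold cc; rewrite !lamz_add; f_equal;
    unfold padd, pneg; cbn [fst snd]; ring.
Qed.

Lemma Z2_subgroup_full (P : Z * Z -> Prop) : P pu -> P pv ->
  (forall p q, P p -> P q -> P (padd p q)) -> (forall p q, P q -> P (padd p q) -> P p) ->
  forall p, P p.
Proof.
  intros Pu Pv Hadd Hcancel.
  assert (P0 : P (0, 0)%Z) by exact (Hcancel (0, 0)%Z pu Pu Pu).
  assert (Pmul : forall g, P g -> forall n, P (n * fst g, n * snd g)%Z).
  { intros g Pg. apply Z.peano_ind.
    - exact P0.
    - intros n Pn. replace (Z.succ n * fst g, Z.succ n * snd g)%Z
        with (padd (n * fst g, n * snd g)%Z g) by (unfold padd; cbn [fst snd]; f_equal; ring).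
      auto.
    - intros n Pn. apply (Hcancel _ g Pg).
      replace (padd (Z.pred n * fst g, Z.pred n * snd g)%Z g) with (n * fst g, n * snd g)%Z
        by (unfold padd, Z.pred; cbn [fst snd]; f_equal; ring). exact Pn. }
  intros [a b]. replace (a, b) with (padd (a * 1, a * 0) (b * 0, b * 1))%Z
    by (unfold padd; cbn [fst snd]; f_equal; ring).
  apply Hadd; [apply (Pmul _ Pu) | apply (Pmul _ Pv)].
Qed.

Lemma Z_two_step_ind (P : Z -> Prop) : P 0%Z -> P 1%Z ->
  (forall k, P (k - 1)%Z -> P (k + 1)%Z) -> (forall k, P (k + 1)%Z -> P (k - 1)%Z) ->
  forall k, P k.
Proof.
  intros P0 P1 Hup Hdown k. enough (P k /\ P (k + 1)%Z) by tauto.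
  induction k as [|k [Pk Pk1]|k [Pk Pk1]] using Z.peano_ind; [auto| |].
  - split.
    + exact Pk1.
    + apply Hup. now replace (Z.succ k - 1)%Z with k by lia.
  - split.
    + apply Hdown. now replace (Z.pred k + 1)%Z with k by lia.
    + now replace (Z.pred k + 1)%Z with k by lia.
Qed.

Lemma two_step_recurrence_zero th (a : Z -> Z) (x : Z -> C) : x 0%Z = C0 -> x 1%Z = C0 ->
  (forall k, x (k + 1)%Z = Cmul (lamz th (a k)) (x (k - 1)%Z)) -> forall k, x k = C0.
Proof.
  intros X0 X1 Hrec. apply Z_two_step_ind; auto.
  - intros k Hk. rewrite Hrec, Hk. ring.
  - intros k Hk. apply (lamz_cancel th (a k)). now rewrite <- Hrec.
Qed.

Section IterationOverZ.
Context {X : Type} (F G : Z -> X -> X).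

Fixpoint iter_up (x0 : X) (n : nat) : X :=
  match n with O => x0 | S n => F (Z.of_nat n) (iter_up x0 n) end.

Fixpoint iter_down (x0 : X) (n : nat) : X :=
  match n with O => x0 | S n => G (- Z.of_nat n - 1)%Z (iter_down x0 n) end.

Definition iterZ (x0 : X) (k : Z) : X :=
  if (k <? 0)%Z then iter_down x0 (Z.to_nat (- k)) else iter_up x0 (Z.to_nat k).

Hypothesis FG : forall k y, F k (G k y) = y.

Lemma iterZ_succ x0 k : iterZ x0 (k + 1) = F k (iterZ x0 k).
Proof.
  unfold iterZ. destruct (Z.ltb_spec (k + 1) 0), (Z.ltb_spec k 0); try lia.
  - replace (Z.to_nat (- k)) with (S (Z.to_nat (- (k + 1)))) by lia. simpl iter_down.
    replace (- Z.of_nat (Z.to_nat (- (k + 1))) - 1)%Z with k by lia. now rewrite FG.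
  - replace k with (-1)%Z by lia. simpl. now rewrite FG.
  - replace (Z.to_nat (k + 1)) with (S (Z.to_nat k)) by lia. simpl iter_up.
    now rewrite Z2Nat.id by lia.
Qed.

End IterationOverZ.

(* The state (x (k), x (k+1)) of the recurrence x (k+1) = lambda^(a k) x (k-1) + b k. *)
Definition rec2_step th (a : Z -> Z) (b : Z -> C) (k : Z) (s : C * C) : C * C :=
  (snd s, Cadd (Cmul (lamz th (a (k + 1)%Z)) (fst s)) (b (k + 1)%Z)).

Definition rec2_unstep th (a : Z -> Z) (b : Z -> C) (k : Z) (s : C * C) : C * C :=
  (Cmul (lamz th (- a (k + 1)%Z)) (Csub (snd s) (b (k + 1)%Z)), fst s).

Lemma rec2_step_unstep th a b k s : rec2_step th a b k (rec2_unstep th a b k s) = s.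
Proof.
  destruct s as [y z]. unfold rec2_step, rec2_unstep. cbn [fst snd]. f_equal.
  transitivity (Cadd (Cmul (Cmul (lamz th (a (k + 1)%Z)) (lamz th (- a (k + 1)%Z)))
    (Csub z (b (k + 1)%Z))) (b (k + 1)%Z)); [ring|].
  rewrite lamz_add, Z.add_opp_diag_r, lamz_0. ring.
Qed.

Definition rec2 th (a : Z -> Z) (b : Z -> C) (h0 h1 : C) (k : Z) : C :=
  fst (iterZ (rec2_step th a b) (rec2_unstep th a b) (h0, h1) k).

Lemma rec2_0 th a b h0 h1 : rec2 th a b h0 h1 0 = h0.
Proof. reflexivity. Qed.

Lemma rec2_1 th a b h0 h1 : rec2 th a b h0 h1 1 = h1.
Proof.
  unfold rec2. change 1%Z with (0 + 1)%Z. now rewrite iterZ_succ by apply rec2_step_unstep.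
Qed.

Lemma rec2_succ th a b h0 h1 j : rec2 th a b h0 h1 (j + 1) =
  Cadd (Cmul (lamz th (a j)) (rec2 th a b h0 h1 (j - 1))) (b j).
Proof.
  unfold rec2. rewrite iterZ_succ by apply rec2_step_unstep.
  replace j with ((j - 1) + 1)%Z at 2 by ring.
  rewrite iterZ_succ by apply rec2_step_unstep. unfold rec2_step. cbn [fst snd].
  now replace (j - 1 + 1)%Z with j by ring.
Qed.

Section CocycleVanishing.
Variables (th : R) (e : Z * Z -> Z * Z -> C).
Hypothesis He : cocycle_Z2 th e.

Definition vanishes_at (p : Z * Z) : Prop := forall r, e p r = C0.

Lemma vanishes_at_add p q : vanishes_at p -> vanishes_at q -> vanishes_at (padd p q).
Proof.
  intros Hp Hq r. apply (lamz_cancel th (snd p * fst q)).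
  fold (cc th p q). rewrite He, Hp, Hq. ring.
Qed.

Lemma vanishes_at_cancel p q : vanishes_at q -> vanishes_at (padd p q) -> vanishes_at p.
Proof.
  intros Hq Hpq r. apply (lamz_cancel th (snd q * fst (padd r (pneg q)))).
  fold (cc th q (padd r (pneg q))).
  replace r with (padd q (padd r (pneg q))) at 2 by solve_Z2_eq.
  pose proof (He p q (padd r (pneg q))) as H. rewrite Hpq, Hq, !Cmul_0_r in H.
  transitivity (Cadd C0 (Cmul (cc th q (padd r (pneg q))) (e p (padd q (padd r (pneg q))))));
    [ring|]. now rewrite <- H.
Qed.

Lemma cocycle_Z2_vanishes : vanishes_at pu -> vanishes_at pv -> forall p r, e p r = C0.
Proof.
  intros Hu Hv. exact (Z2_subgroup_full vanishes_at Hu Hv vanishes_at_add vanishes_at_cancel).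
Qed.

Lemma vanishes_at_pv_shift : vanishes_at pu ->
  forall r, e pv (padd r pu) = Cmul (lamz th (1 - snd r)) (e pv (padd r (pneg pu))).
Proof.
  intros Hu r.
  pose proof (He pv pu r) as A. pose proof (He pu pv r) as B.
  rewrite Hu, Cmul_0_r in A, B. unfold cc in A, B. cbn [fst snd pu pv] in A, B.
  change (fst (pneg pu)) with (-1)%Z in B. change (padd pv pu) with (padd pu pv) in A.
  rewrite Z.mul_0_l, lamz_0 in A. rewrite Z.mul_0_r, lamz_0 in B.
  replace (padd r pu) with (padd pu r) by solve_Z2_eq.
  change (1 * 1)%Z with 1%Z in A.
  transitivity (Cmul (lamz th 1) (e (padd pu pv) r)); [rewrite A; ring|].
  transitivity (Cmul (lamz th 1) (Cmul C1 (e (padd pu pv) r))); [ring|].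
  rewrite B. replace (1 - snd r)%Z with (1 + snd r * -1)%Z by ring.
  rewrite <- lamz_add. ring.
Qed.

Lemma vanishes_at_pv : vanishes_at pu ->
  (forall m, e pv (0, m)%Z = C0) -> (forall m, e pv (1, m)%Z = C0) -> vanishes_at pv.
Proof.
  intros Hu H0 H1 [k m].
  apply (two_step_recurrence_zero th (fun _ => 1 - m)%Z (fun k => e pv (k, m))); auto.
  intros j. pose proof (vanishes_at_pv_shift Hu (j, m)%Z) as H.
  replace (padd (j, m) pu) with (j + 1, m)%Z in H by solve_Z2_eq.
  replace (padd (j, m) (pneg pu)) with (j - 1, m)%Z in H by solve_Z2_eq.
  exact H.
Qed.

End CocycleVanishing.

Section Primitive.
Variables (th : R) (d : Z * Z -> Z * Z -> C).

Definition primitive_col0 : Z -> C :=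
  rec2 th (fun _ => 0%Z) (fun m => Copp (d pv (0, m)%Z)) C0 C0.

Definition primitive_col1 : Z -> C :=
  rec2 th (fun _ => (-1)%Z) (fun m => Copp (Cmul (lamz th (-1)) (d pv (1, m)%Z))) C0 C0.

(* Row by row, [primitive] solves [delta primitive pu = d pu]; the columns 0 and 1 that seed the
   rows are chosen so that also [delta primitive pv = d pv] there. *)
Definition primitive (p : Z * Z) : C :=
  rec2 th (fun _ => (- snd p)%Z) (fun k => Copp (d pu (k, snd p)%Z))
    (primitive_col0 (snd p)) (primitive_col1 (snd p)) (fst p).

Lemma delta_primitive_pu r : delta th primitive pu r = d pu r.
Proof.
  destruct r as [k m]. unfold delta, cc.
  replace (padd (k, m) (pneg pu)) with (k - 1, m)%Z by solve_Z2_eq.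
  replace (padd pu (k, m)) with (k + 1, m)%Z by solve_Z2_eq.
  unfold primitive. cbn [fst snd pu pneg]. rewrite rec2_succ.
  rewrite Z.mul_opp_r, Z.mul_1_r, Z.mul_0_l, lamz_0. ring.
Qed.

Lemma delta_primitive_pv_col0 m : delta th primitive pv (0, m)%Z = d pv (0, m)%Z.
Proof.
  unfold delta, cc.
  replace (padd (0, m)%Z (pneg pv)) with (0, m - 1)%Z by solve_Z2_eq.
  replace (padd pv (0, m)%Z) with (0, m + 1)%Z by solve_Z2_eq.
  unfold primitive. cbn [fst snd pv pneg]. rewrite !rec2_0.
  unfold primitive_col0 at 2. rewrite rec2_succ.
  replace (m * - 0)%Z with 0%Z by ring. change (1 * 0)%Z with 0%Z.
  rewrite lamz_0. unfold primitive_col0. ring.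
Qed.

Lemma delta_primitive_pv_col1 m : delta th primitive pv (1, m)%Z = d pv (1, m)%Z.
Proof.
  unfold delta, cc.
  replace (padd (1, m)%Z (pneg pv)) with (1, m - 1)%Z by solve_Z2_eq.
  replace (padd pv (1, m)%Z) with (1, m + 1)%Z by solve_Z2_eq.
  unfold primitive. cbn [fst snd pv pneg]. rewrite !rec2_1.
  unfold primitive_col1 at 2. rewrite rec2_succ.
  rewrite Z.mul_0_r, lamz_0, Z.mul_1_l.
  transitivity (Cadd (Cmul (Csub C1 (Cmul (lamz th 1) (lamz th (-1))))
    (primitive_col1 (m - 1))) (Cmul (Cmul (lamz th 1) (lamz th (-1))) (d pv (1, m)%Z)));
    [unfold primitive_col1; ring|].
  rewrite lamz_add, Z.add_opp_diag_r, lamz_0. ring.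
Qed.

Lemma cocycle_Z2_coboundary : cocycle_Z2 th d -> forall p r, d p r = delta th primitive p r.
Proof.
  intros Hd.
  set (e := fun p r => Csub (d p r) (delta th primitive p r)).
  assert (He : cocycle_Z2 th e) by (apply cocycle_Z2_sub; [exact Hd | apply delta_cocycle]).
  assert (Hu : vanishes_at e pu) by (intros r; unfold e; rewrite delta_primitive_pu; ring).
  assert (Hv : vanishes_at e pv).
  { apply (vanishes_at_pv th e He Hu); intros m; unfold e.
    - rewrite delta_primitive_pv_col0. ring.
    - rewrite delta_primitive_pv_col1. ring. }
  intros p r. apply Csub_eq0. exact (cocycle_Z2_vanishes th e He Hu Hv p r).
Qed.

End Primitive.

Theorem mainTheorem7 (theta : R) (Hirr : irrational theta) :
  H1_twisted_dual_vanishes theta.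
Proof.
  intros D HD Hco.
  set (d := fun p r => D (mono p) (mono r)).
  exists (phif (primitive theta d)). split; [apply phif_linear|].
  apply (cochain1_ext D (coboundary0 theta (phif (primitive theta d)))).
  - exact HD.
  - apply coboundary0_cochain, phif_linear.
  - intros p r. rewrite coboundary0_phif_mono.
    apply (cocycle_Z2_coboundary theta d), cocycle_Z2_monomials; assumption.
Qed.
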